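(* Assume the standing setting below and run the DMFW algorithm with $\eta_k=\frac{2}{k+2}$ (and any $\gamma_k\in(0,1]$). Then for every $i\in\mathcal N$ and $k\ge1$, $$\|\hat x_k^i-\bar x_k\|\le\frac{2C_1}{k+2},\qquad C_1=k_0\sqrt nD.$$
   Context: Setting. There are $n$ agents $\mathcal N=\{1,\dots,n\}$ connected by a connected graph $\mathcal G=(\mathcal N,\mathcal E)$ with weight matrix $C=[c_{ij}]\in\mathbb R^{n\times n}$, where $c_{ij}\ge 0$ and $c_{ij}=0$ whenever $j\ne i$ and $(i,j)\notin\mathcal E$. $C$ is doubly stochastic, i.e. all row sums and all column sums equal $1$. Let $\lambda$ be the second largest eigenvalue of $C$ in magnitude. It is assumed that $|\lambda|<1$ and that for all vectors $x^1,\dots,x^n\in\mathbb R^p$, with $\bar x=\frac1n\sum_i x^i$ and $\hat x^i=\sum_j c_{ij}x^j$, one has $\big(\sum_i\|\hat x^i-\bar x\|^2\big)^{1/2}\le|\lambda|\big(\sum_i\|x^i-\bar x\|^2\big)^{1/2}$. Let $k_0$ be the smallest positive integer with $|\lambda|\le (k_0/(k_0+1))^2$. Problem data. $\mathcal X\subset\mathbb R^p$ is convex and compact with diameter $D$, i.e. $\|x-x'\|\le D$ for all $x,x'\in\mathcal X$. For each $i$, $\xi^i$ is a random variable. The function $f_i(\cdot,\xi)$ is differentiable with $L$-Lipschitz gradient for every $\xi$. $F_i(x)=\mathbb E[f_i(x,\xi^i)]$ is differentiable with $\nabla F_i(x)=\mathbb E[\nabla f_i(x,\xi^i)]$ and $L$-Lipschitz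 gradient. For all $x\in\mathcal X$ and $i$, $\mathbb E\|\nabla F_i(x)-\nabla f_i(x,\xi^i)\|^2\le\delta^2$. Set $F=\frac1n\sum_{i=1}^nF_i$. DMFW algorithm. Fix step sizes $\gamma_k,\eta_k\in(0,1]$ and deterministic initial points $x_1^i\in\mathcal X$. The samples $\xi_k^i$ ($k\ge1$, $i\in\mathcal N$) are mutually independent, and $\xi_k^i$ has the distribution of $\xi^i$. For $k=1,2,\dots$ and each $i$: - $\hat x_k^i=\sum_{j=1}^n c_{ij}x_k^j$. - For $k=1$: $y_1^i=s_1^i=\nabla f_i(\hat x_1^i,\xi_1^i)$. For $k\ge2$: $y_k^i=(1-\gamma_k)y_{k-1}^i+\nabla f_i(\hat x_k^i,\xi_k^i)-(1-\gamma_k)\nabla f_i(\hat x_{k-1}^i,\xi_k^i)$ and $s_k^i=\sum_j c_{ij}s_{k-1}^j+y_k^i-y_{k-1}^i$. - $p_k^i=\sum_j c_{ij}s_k^j$. - $\theta_k^i\in\arg\min_{\phi\in\mathcal X}\langle p_k^i,\phi\rangle$. - $x_{k+1}^i=\hat x_k^i+\eta_k(\theta_k^i-\hat x_k^i)$. Notation: $\bar x_k=\frac1n\sum_i x_k^i$. *)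

From HB Require Import structures.
From mathcomp Require Import all_boot all_order all_algebra.
From mathcomp Require Import complex.
From mathcomp Require Import all_classical all_reals all_analysis.
Set Implicit Arguments. Unset Strict Implicit. Unset Printing Implicit Defensive.
Import Order.TTheory GRing.Theory Num.Theory.
Import numFieldNormedType.Exports.
Local Open Scope ring_scope.

Definition edot {R : realType} {p : nat} (u v : 'rV[R]_p) : R :=
  \sum_(j < p) u 0 j * v 0 j.
Definition enorm {R : realType} {p : nat} (u : 'rV[R]_p) : R :=
  Num.sqrt (\sum_(j < p) u 0 j ^+ 2).

Definition avg {R : realType} {n p : nat} (x : 'I_n -> 'rV[R]_p) : 'rV[R]_p :=
  (n%:R)^-1 *: \sum_(i < n) x i.

Definition mix {R : realType} {n p : nat} (C : 'M[R]_n) (x : 'I_n -> 'rV[R]_p)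
  (i : 'I_n) : 'rV[R]_p := \sum_(j < n) C i j *: x j.

Definition convex_subset {R : realType} {p : nat} (X : set 'rV[R]_p) : Prop :=
  forall x y t, X x -> X y -> 0 <= t -> t <= 1 -> X (t *: x + (1 - t) *: y).

Definition connected_graph {n : nat} (E : rel 'I_n) : Prop :=
  symmetric E /\ irreflexive E /\ forall i j, connect E i j.

(* mu is the modulus |lambda| of the second largest (in magnitude) eigenvalue
   of C: the eigenvalues of C (complex, with multiplicity) are the roots
   s of its characteristic polynomial; mu is the second entry of the list of
   their moduli sorted in nonincreasing order. *)
Definition second_eig_modulus {R : realType} {n : nat} (C : 'M[R]_n) (mu : R)
  : Prop :=
  exists s : seq R[i],
    map_poly (real_complex R) (char_poly C) = \prod_(z <- s) ('X - z%:P)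
    /\ mu = nth 0 (sort (fun a b : R => b <= a) [seq Normc.normc z | z <- s]) 1.

From HB Require Import structures.
From mathcomp Require Import all_boot all_order all_algebra.
From mathcomp Require Import complex.
From mathcomp Require Import all_classical all_reals all_analysis.
From mathcomp Require Import ring lra.
Import Order.TTheory GRing.Theory Num.Theory.
Import numFieldNormedType.Exports.
Local Open Scope ring_scope.

(* The consensus error e(z) = (sum_i |z^i - zbar|^2)^(1/2) contracts by mu under
   mixing (C is column stochastic, so mixing preserves the average), and the
   Frank-Wolfe step is a convex combination with points of X, whose consensus
   error is at most sqrt(n) D. Hence e_(k+1) <= mu ((1 - eta_k) e_k + eta_k sqrt(n) D)
   for e_k = e(xhat_k), and mu <= (k0/(k0+1))^2 turns this recursion into
   e_k <= 2 k0 sqrt(n) D / (k + 2) by induction; each |xhat_k^i - xbar_k| is at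
   most e_k. *)

Section L2Norm.
Context {R : realType} {I : finType}.
Implicit Types (u v : I -> R).

Definition l2norm u : R := Num.sqrt (\sum_i u i ^+ 2).

Lemma l2norm_ge0 u : 0 <= l2norm u.
Proof. exact: sqrtr_ge0. Qed.

Lemma l2norm_sqr u : l2norm u ^+ 2 = \sum_i u i ^+ 2.
Proof. by rewrite sqr_sqrtr // sumr_ge0 // => i _; apply: sqr_ge0. Qed.

Lemma l2norm_eq0 u : l2norm u = 0 -> forall i, u i = 0.
Proof.
move=> u0 i; have sum0 : \sum_i u i ^+ 2 = 0 by rewrite -l2norm_sqr u0 expr0n.
have /eqP := @psumr_eq0P _ _ xpredT _ (fun i _ => sqr_ge0 (u i)) sum0 i isT.
by rewrite sqrf_eq0 => /eqP.
Qed.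

Lemma sum_mul_le_l2norm u v : \sum_i u i * v i <= l2norm u * l2norm v.
Proof.
have [u0|/negP nz_u] := eqVneq (l2norm u) 0.
  by rewrite u0 mul0r big1 // => i _; rewrite (l2norm_eq0 _ u0) mul0r.
have [v0|/negP nz_v] := eqVneq (l2norm v) 0.
  by rewrite v0 mulr0 big1 // => i _; rewrite (l2norm_eq0 _ v0) mulr0.
have A0 : 0 < l2norm u by rewrite lt_def l2norm_ge0 andbT; apply/negP.
have B0 : 0 < l2norm v by rewrite lt_def l2norm_ge0 andbT; apply/negP.
set A := l2norm u in A0 *; set B := l2norm v in B0 *.
rewrite -(ler_pM2l (_ : 0 < 2 * A * B)) ?mulr_gt0 //.
(* 2AB u_i v_i <= B^2 u_i^2 + A^2 v_i^2, and the right-hand sides add up to 2 A^2 B^2. *)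
have -> : 2 * A * B * (A * B) = \sum_i (B ^+ 2 * u i ^+ 2 + A ^+ 2 * v i ^+ 2).
  by rewrite big_split /= -!mulr_sumr -!l2norm_sqr -/A -/B; ring.
rewrite mulr_sumr; apply: ler_sum => i _.
by have := sqr_ge0 (B * u i - A * v i); nra.
Qed.

Lemma l2normD_le u v : l2norm (fun i => u i + v i) <= l2norm u + l2norm v.
Proof.
rewrite -ler_sqr ?nnegrE ?addr_ge0 ?l2norm_ge0 // !l2norm_sqr.
have -> : \sum_i (u i + v i) ^+ 2
    = \sum_i u i ^+ 2 + 2 * \sum_i u i * v i + \sum_i v i ^+ 2.
  by rewrite mulr_sumr -!big_split /=; apply: eq_bigr => i _; ring.
by rewrite -!l2norm_sqr; have := sum_mul_le_l2norm u v; nra.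
Qed.

Lemma l2normZ c u : l2norm (fun i => c * u i) = `|c| * l2norm u.
Proof.
rewrite /l2norm -sqrtr_sqr -sqrtrM ?sqr_ge0 // mulr_sumr.
by congr Num.sqrt; apply: eq_bigr => i _; rewrite exprMn.
Qed.

Lemma l2norm_le u v : (forall i, 0 <= u i <= v i) -> l2norm u <= l2norm v.
Proof.
move=> le_uv; apply: ler_wsqrtr; apply: ler_sum => i _.
by have /andP[u0 uv] := le_uv i; rewrite ler_sqr ?nnegrE ?(le_trans u0 uv).
Qed.

Lemma ler_norm_l2norm u i : `|u i| <= l2norm u.
Proof.
rewrite -sqrtr_sqr; apply: ler_wsqrtr.
by rewrite (bigD1 i) //= lerDl sumr_ge0 // => j _; apply: sqr_ge0.
Qed.

Lemma l2norm_le_sqrt_card u D :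
  0 <= D -> (forall i, `|u i| <= D) -> l2norm u <= Num.sqrt #|I|%:R * D.
Proof.
move=> D0 le_uD; rewrite -[D in _ * D]ger0_norm // -sqrtr_sqr -sqrtrM ?ler0n //.
apply: ler_wsqrtr; rewrite -sum1_card natr_sum mulr_suml; apply: ler_sum => i _.
by rewrite mul1r -real_normK ?num_real // ler_sqr ?nnegrE.
Qed.

End L2Norm.

Section EuclideanNorm.
Context {R : realType} {p : nat}.
Implicit Types (u v : 'rV[R]_p).

Lemma enorm_ge0 u : 0 <= enorm u.
Proof. exact: sqrtr_ge0. Qed.

Lemma enormD_le u v : enorm (u + v) <= enorm u + enorm v.
Proof.
have -> : enorm (u + v) = l2norm (fun j => u 0 j + v 0 j).
  by rewrite /enorm /l2norm; congr Num.sqrt; apply: eq_bigr => j _; rewrite mxE.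
exact: l2normD_le.
Qed.

Lemma enormZ c u : enorm (c *: u) = `|c| * enorm u.
Proof.
rewrite -[enorm u]/(l2norm (fun j => u 0 j)) -l2normZ.
by rewrite /enorm /l2norm; congr Num.sqrt; apply: eq_bigr => j _; rewrite mxE.
Qed.

Lemma enorm_sum_le (J : finType) (F : J -> 'rV[R]_p) :
  enorm (\sum_j F j) <= \sum_j enorm (F j).
Proof.
apply: (big_ind2 (fun u b => enorm u <= b)) => //.
- by rewrite /enorm big1 ?sqrtr0 // => j _; rewrite mxE expr0n.
- by move=> u a v b ua vb; apply: le_trans (enormD_le u v) (lerD ua vb).
Qed.

End EuclideanNorm.

Section Consensus.
Context {R : realType} {n p : nat}.
Implicit Types (z u v w : 'I_n -> 'rV[R]_p).

Definition consensus_error z : R := l2norm (fun i => enorm (z i - avg z)).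

Lemma consensus_error_ge0 z : 0 <= consensus_error z.
Proof. exact: l2norm_ge0. Qed.

Lemma eq_avg z w : z =1 w -> avg z = avg w.
Proof. by move=> zw; rewrite /avg (eq_bigr _ (fun i _ => zw i)). Qed.

Lemma avg_mix (C : 'M[R]_n) z :
  (forall j, \sum_i C i j = 1) -> avg (mix C z) = avg z.
Proof.
move=> col1; rewrite /avg /mix exchange_big /=; congr (_ *: _).
by apply: eq_bigr => j _; rewrite -scaler_suml col1 scale1r.
Qed.

Lemma avg_lincomb a b u v :
  avg (fun i => a *: u i + b *: v i) = a *: avg u + b *: avg v.
Proof. by rewrite /avg big_split -!scaler_sumr /= scalerDr !scalerA mulrC (mulrC b). Qed.

Lemma enorm_sub_avg_le z D : (0 < n)%N ->
  (forall i l, enorm (z i - z l) <= D) -> forall i, enorm (z i - avg z) <= D.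
Proof.
move=> n_gt0 le_zD i; have nz_n : n%:R != 0 :> R by rewrite pnatr_eq0 -lt0n.
have -> : z i - avg z = n%:R^-1 *: \sum_l (z i - z l).
  rewrite sumrB sumr_const card_ord -[z i *+ n]scaler_nat scalerBr scalerA.
  by rewrite mulVf // scale1r.
rewrite enormZ ger0_norm ?invr_ge0 ?ler0n // ler_pdivrMl ?ltr0n //.
apply: le_trans (enorm_sum_le _ _) _.
apply: le_trans (ler_sum _ (fun l _ => le_zD i l)) _.
by rewrite sumr_const card_ord mulr_natl.
Qed.

Lemma consensus_error_le z D : (0 < n)%N ->
  (forall i l, enorm (z i - z l) <= D) -> consensus_error z <= Num.sqrt n%:R * D.
Proof.
move=> n_gt0 le_zD; have D0 : 0 <= D.
  by apply: le_trans (le_zD (Ordinal n_gt0) (Ordinal n_gt0)); apply: enorm_ge0.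
rewrite -[n in n%:R]card_ord; apply: l2norm_le_sqrt_card => // i.
by rewrite ger0_norm ?enorm_ge0 // enorm_sub_avg_le.
Qed.

Lemma consensus_error_convex u v w t : 0 <= t <= 1 ->
  (forall i, w i = (1 - t) *: u i + t *: v i) ->
  consensus_error w <= (1 - t) * consensus_error u + t * consensus_error v.
Proof.
move=> /andP[t0 t1] def_w; have t'0 : 0 <= 1 - t by rewrite subr_ge0.
have -> : (1 - t) * consensus_error u + t * consensus_error v
    = l2norm (fun i => (1 - t) * enorm (u i - avg u))
      + l2norm (fun i => t * enorm (v i - avg v)).
  by rewrite !l2normZ !ger0_norm.
apply: le_trans (l2normD_le _ _); apply: l2norm_le => i.
rewrite enorm_ge0 (eq_avg _ _ def_w) avg_lincomb def_w /=.
rewrite (_ : _ - _ = (1 - t) *: (u i - avg u) + t *: (v i - avg v)).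
  by apply: le_trans (enormD_le _ _) _; rewrite !enormZ !ger0_norm.
by rewrite !scalerBr opprD addrACA.
Qed.

End Consensus.

Lemma consensus_rate_step {R : realType} {m a Q K S : R} :
  0 <= m -> m * (a + 1) ^+ 2 <= a ^+ 2 -> 0 <= a -> 0 <= Q -> 0 <= K ->
  S <= 2 * (a * Q) / (K + 2) ->
  m * ((1 - 2 / (K + 2)) * S + 2 / (K + 2) * Q) <= 2 * (a * Q) / (K + 1 + 2).
Proof.
move=> m0 ma a0 Q0 K0 le_S; have K2 : 0 < K + 2 by lra.
set P := (a * K + K + 2) * (K + 3).
have P0 : 0 <= P by rewrite /P; nra.
have aP : a * P <= (a + 1) ^+ 2 * (K + 2) ^+ 2.
  rewrite /P; have aK := mulr_ge0 a0 K0; have aaK := mulr_ge0 (mulr_ge0 a0 a0) K0.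
  have aKK := mulr_ge0 aK K0; nra.
have mP : m * P <= a * (K + 2) ^+ 2.
  have a1 : 0 < (a + 1) ^+ 2 by apply: exprn_gt0; lra.
  rewrite -(ler_pM2l a1); apply: le_trans (_ : a ^+ 2 * P <= _).
    by rewrite mulrA [_ * m]mulrC ler_wpM2r.
  by have := ler_wpM2l a0 aP; nra.
have le_comb : (1 - 2 / (K + 2)) * S + 2 / (K + 2) * Q
    <= 2 * Q * (a * K + K + 2) / (K + 2) ^+ 2.
  have eta1 : 0 <= 1 - 2 / (K + 2) by rewrite subr_ge0 ler_pdivrMr //; lra.
  apply: le_trans (lerD (ler_wpM2l eta1 le_S) (lexx _)) _.
  by rewrite le_eqVlt; apply/orP; left; apply/eqP; field; lra.
apply: le_trans (ler_wpM2l m0 le_comb) _.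
rewrite (_ : m * _ = 2 * Q * (m * P) / ((K + 2) ^+ 2 * (K + 3))); last first.
  by rewrite /P; field; lra.
rewrite ler_pdivrMr ?mulr_gt0 ?exprn_gt0 //; last lra.
rewrite (_ : 2 * (a * Q) / _ * _ = 2 * Q * (a * (K + 2) ^+ 2)); last by field; lra.
by rewrite ler_wpM2l // mulr_ge0.
Qed.
Theorem lemma1
  (R : realType) (n p : nat) (Hn : (0 < n)%N)
  (* communication graph and weight matrix *)
  (E : rel 'I_n) (HE : connected_graph E)
  (C : 'M[R]_n)
  (HCnn : forall i j, 0 <= C i j)
  (HCedge : forall i j, i != j -> ~~ E i j -> C i j = 0)
  (HCrow : forall i, \sum_(j < n) C i j = 1)
  (HCcol : forall j, \sum_(i < n) C i j = 1)
  (mu : R) (* mu = |lambda| *)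
  (Hmu : second_eig_modulus C mu) (Hmu1 : mu < 1)
  (Hcontr : forall x : 'I_n -> 'rV[R]_p,
     Num.sqrt (\sum_(i < n) enorm (mix C x i - avg x) ^+ 2)
       <= mu * Num.sqrt (\sum_(i < n) enorm (x i - avg x) ^+ 2))
  (k0 : nat) (Hk0pos : (0 < k0)%N)
  (Hk0 : mu <= (k0%:R / k0.+1%:R) ^+ 2)
  (Hk0min : forall k : nat, (0 < k)%N -> mu <= (k%:R / k.+1%:R) ^+ 2 -> (k0 <= k)%N)
  (* constraint set *)
  (X : set 'rV[R]_p) (HXconv : convex_subset X) (HXcomp : compact X)
  (D : R) (HD : forall x x', X x -> X x' -> enorm (x - x') <= D)
  (* local (sampled) objectives and their gradients *)
  (Xi : Type) (L : R)
  (f : 'I_n -> 'rV[R]_p -> Xi -> R) (gf : 'I_n -> 'rV[R]_p -> Xi -> 'rV[R]_p)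
  (Hfdiff : forall i xi x, differentiable (fun y => f i y xi) x)
  (Hfgrad : forall i xi x v, 'D_v (fun y => f i y xi) x = edot (gf i x xi) v)
  (HfL : forall i xi x y, enorm (gf i x xi - gf i y xi) <= L * enorm (x - y))
  (* an arbitrary realization of the samples xi_k^i *)
  (xi : nat -> 'I_n -> Xi)
  (* step sizes *)
  (gamma : nat -> R) (Hgamma : forall k, (1 <= k)%N -> 0 < gamma k <= 1)
  (eta : nat -> R) (Heta : forall k, eta k = 2 / (k%:R + 2))
  (* the DMFW iterates (indices k >= 1) *)
  (x xhat y s pp theta : nat -> 'I_n -> 'rV[R]_p)
  (Hx1 : forall i, X (x 1%N i))
  (Hxhat : forall k i, (1 <= k)%N -> xhat k i = mix C (x k) i)
  (Hy1 : forall i, y 1%N i = gf i (xhat 1%N i) (xi 1%N i))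
  (Hs1 : forall i, s 1%N i = y 1%N i)
  (Hy : forall k i, (2 <= k)%N ->
     y k i = (1 - gamma k) *: y k.-1 i + gf i (xhat k i) (xi k i)
             - (1 - gamma k) *: gf i (xhat k.-1 i) (xi k i))
  (Hs : forall k i, (2 <= k)%N -> s k i = mix C (s k.-1) i + y k i - y k.-1 i)
  (Hp : forall k i, (1 <= k)%N -> pp k i = mix C (s k) i)
  (Htheta : forall k i, (1 <= k)%N ->
     X (theta k i) /\ forall phi, X phi -> edot (pp k i) (theta k i) <= edot (pp k i) phi)
  (Hxnext : forall k i, (1 <= k)%N ->
     x k.+1 i = xhat k i + eta k *: (theta k i - xhat k i)) :
  forall (i : 'I_n) (k : nat), (1 <= k)%N ->
    enorm (xhat k i - avg (x k))
      <= 2 * (k0%:R * Num.sqrt n%:R * D) / (k%:R + 2).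
Proof.
move=> i k k_ge1.
set Q := Num.sqrt n%:R * D; set a : R := k0%:R; set m := Num.max mu 0.
have m0 : 0 <= m by rewrite le_max lexx orbT.
have ma : m * (a + 1) ^+ 2 <= a ^+ 2.
  have a1 : 0 < (a + 1) ^+ 2 by rewrite exprn_gt0 // ltr_wpDl.
  rewrite -ler_pdivlMr // ge_max divr_ge0 ?sqr_ge0 ?(ltW a1) // andbT.
  by move: Hk0; rewrite expr_div_n -natr1.
have in_X_bound (z : 'I_n -> 'rV[R]_p) : (forall j, X (z j)) -> consensus_error z <= Q.
  by move=> zX; apply: consensus_error_le => // j l; apply: HD.
have Q0 : 0 <= Q := le_trans (consensus_error_ge0 _) (in_X_bound _ Hx1).
have avg_xhat l : (1 <= l)%N -> avg (xhat l) = avg (x l).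
  by move=> l_ge1; rewrite (eq_avg _ _ (Hxhat l ^~ l_ge1)) avg_mix.
have mixing l : (1 <= l)%N -> consensus_error (xhat l) <= m * consensus_error (x l).
  move=> l_ge1; apply: (@le_trans _ _ (mu * consensus_error (x l))).
    rewrite /consensus_error avg_xhat //; apply: le_trans (Hcontr (x l)).
    by rewrite /l2norm; under eq_bigr => j _ do rewrite Hxhat //.
  by rewrite ler_wpM2r ?consensus_error_ge0 // le_max lexx.
have frank_wolfe l : (1 <= l)%N ->
    consensus_error (x l.+1) <= (1 - eta l) * consensus_error (xhat l) + eta l * Q.
  move=> l_ge1; have eta_01 : 0 <= eta l <= 1.
    have l0 : 0 <= l%:R :> R := ler0n _ _.
    by rewrite Heta divr_ge0 ?ler_pdivrMr /=; lra.
  apply: le_trans (consensus_error_convex (xhat l) (theta l) _ _ eta_01 _) _.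
    by move=> j; rewrite Hxnext // scalerBr scalerBl scale1r addrAC addrA.
  rewrite lerD2l ler_wpM2l ?(andP eta_01).1 // in_X_bound // => j.
  exact: (Htheta l j l_ge1).1.
have rate l : consensus_error (xhat l.+1) <= 2 * (a * Q) / (l.+1%:R + 2).
  elim: l => [|l IH].
    apply: le_trans (mixing 1%N isT) _; apply: le_trans (ler_wpM2l m0 (in_X_bound _ Hx1)) _.
    have := consensus_rate_step m0 ma (ler0n _ k0) Q0 (lexx 0) (_ : 0 <= _).
    rewrite mulr0 !add0r divff ?mul1r //; apply.
    by rewrite divr_ge0 // mulr_ge0 // (mulr_ge0 (ler0n _ _) Q0).
  apply: le_trans (mixing l.+2 isT) _.
  apply: le_trans (ler_wpM2l m0 (frank_wolfe l.+1 isT)) _.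
  by rewrite Heta -[l.+2%:R]natr1; apply: consensus_rate_step; rewrite ?ler0n.
case: k k_ge1 => // l _; rewrite -[a * _ * D]mulrA.
apply: le_trans (rate l); rewrite -avg_xhat //.
by apply: le_trans (ler_norm_l2norm _ i); rewrite ger0_norm ?enorm_ge0.
Qed.
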